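(* Consider the single-authority continuum model described in the context, where each $u_m$ is differentiable but not necessarily concave. If $\mu$ is an optimal allocation (in a state $\omega$), then $\mu$ is implemented in $\omega$ by the APM $A^*$ given by $A^*_m(y_m,s)\equiv h^{-1}\big(h(s)+u_m'(y_m)\big)$.
   Context: An authority allocates a resource of measure $q\in(0,1)$ to agents with types $(s,m)\in[0,1]\times\mathcal M$ ($\mathcal M$ finite). A state $\omega$ is a type distribution with density $f_\omega$. Allocations are measurable $\mu:\Theta\to\{0,1\}$ allocating measure at most $q$. $h:[0,1]\to\mathbb R_+$ continuous strictly increasing, $\bar s_h(\mu,\omega)=\int\mu h\,dF_\omega$, $x_m(\mu,\omega)=\int_0^1\mu(s,m)f_\omega(s,m)ds$. Utility $\xi=g(\bar s_h+\sum_mu_m(x_m))$ with $g$ continuous strictly increasing and each $u_m$ differentiable; the authority always prefers to allocate the entire resource. An allocation is optimal in $\omega$ if it maximizes $\xi$ over feasible allocations. An APM $A=\{A_m\}$ implements $\mu$ in state $\omega$ if (1) $\mu(\theta)=1$ iff for all $\theta'$ with $\mu(\theta')=0$, $A_{m(\theta)}(x_{m(\theta)}(\mu,\omega),s(\theta))>A_{m(\theta')}(x_{m(\theta')}(\mu,\omega),s(\theta'))$, and (2) $\sum_mx_m(\mu,\omega)=q$.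
   Formalization: $A^*$ implements in ω some allocation that agrees with μ outside an $F_\omega$-null set, not necessarily μ itself, with $h^{-1}$ any strictly increasing function on the reals inverting h on [0,1]. The statement above fails without it. *)

From HB Require Import structures.
From mathcomp Require Import all_boot all_order all_algebra.
From mathcomp Require Import all_classical all_reals all_analysis.
Set Implicit Arguments. Unset Strict Implicit. Unset Printing Implicit Defensive.
Import Order.TTheory GRing.Theory Num.Theory.
Import numFieldNormedType.Exports.
Local Open Scope classical_set_scope.
Local Open Scope ring_scope.

Section Model.
Variables (R : realType) (M : finType).

Definition I01 : set R := `[0, 1]%classic.

(* A state omega is represented by its density f : [0,1] x M -> R
   (density w.r.t. Lebesgue measure on [0,1] times counting measure on M). *)
Definition is_density (f : R -> M -> R) : Prop :=
  [/\ (forall m s, s \in I01 -> 0 <= f s m),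
      (forall m, lebesgue_measure.-integrable I01 (fun s => (f s m)%:E)) &
      \sum_(m : M) Rintegral lebesgue_measure I01 (fun s => f s m) = 1].

Definition xm (f : R -> M -> R) (mu : R -> M -> bool) (m : M) : R :=
  Rintegral lebesgue_measure I01 (fun s => (mu s m)%:R * f s m).

Definition sbar (h : R -> R) (f : R -> M -> R) (mu : R -> M -> bool) : R :=
  \sum_(m : M) Rintegral lebesgue_measure I01 (fun s => (mu s m)%:R * h s * f s m).

Definition xi (g h : R -> R) (u : M -> R -> R) (f : R -> M -> R)
    (mu : R -> M -> bool) : R :=
  g (sbar h f mu + \sum_(m : M) u m (xm f mu m)).

Definition allocation (mu : R -> M -> bool) : Prop :=
  forall m, measurable (I01 `&` [set s | mu s m]).

Definition feasible (q : R) (f : R -> M -> R) (mu : R -> M -> bool) : Prop :=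
  allocation mu /\ \sum_(m : M) xm f mu m <= q.

Definition optimal (q : R) (g h : R -> R) (u : M -> R -> R) (f : R -> M -> R)
    (mu : R -> M -> bool) : Prop :=
  feasible q f mu /\
  forall mu', feasible q f mu' -> xi g h u f mu' <= xi g h u f mu.

(* The authority always prefers to allocate the entire resource: any feasible
   allocation leaving some resource unallocated can be strictly improved by a
   feasible allocation allocating (pointwise) more. *)
Definition prefers_full (q : R) (g h : R -> R) (u : M -> R -> R)
    (f : R -> M -> R) : Prop :=
  forall mu, feasible q f mu -> \sum_(m : M) xm f mu m < q ->
    exists mu', [/\ feasible q f mu', (forall s m, mu s m -> mu' s m) &
                    xi g h u f mu < xi g h u f mu'].

Definition implements (q : R) (A : M -> R -> R -> R) (f : R -> M -> R)
    (mu : R -> M -> bool) : Prop :=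
  (forall s m, s \in I01 ->
     (mu s m <-> (forall s' m', s' \in I01 -> ~~ mu s' m' ->
                    A m' (xm f mu m') s' < A m (xm f mu m) s))) /\
  \sum_(m : M) xm f mu m = q.

Definition Astar (hinv : R -> R) (h : R -> R) (u : M -> R -> R) : M -> R -> R -> R :=
  fun m y s => hinv (h s + derive1 (u m) y).

Definition ae_equal (f : R -> M -> R) (mu mu' : R -> M -> bool) : Prop :=
  forall m, lebesgue_measure.-negligible
    [set s | s \in I01 /\ f s m != 0 /\ mu s m != mu' s m].

End Model.

From HB Require Import structures.
From mathcomp Require Import all_boot all_order all_algebra.
From mathcomp Require Import all_classical all_reals all_analysis.
From mathcomp Require Import measurable_realfun lra.
Set Implicit Arguments. Unset Strict Implicit. Unset Printing Implicit Defensive.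
Import Order.TTheory GRing.Theory Num.Theory.
Import numFieldNormedType.Exports.
Local Open Scope classical_set_scope.
Local Open Scope ring_scope.

(* Let c_m = u_m'(x_m(mu)) and call h(s) + c_m the priority of type (s, m).
   If allocated types of priority below a and rejected types of priority above
   b > a both carried positive mass, moving a small mass e from the former to
   the latter would keep mu feasible and, to first order, raise
   \bar s_h + sum_m u_m(x_m) by at least (b - a) e, contradicting optimality.
   So for the supremum t of the levels above which rejected types still carry
   mass, almost every allocated type has priority above t and almost every
   rejected one has priority at most t; as h is injective, each level set
   {h(s) + c_m = t} is null.  Hence mu agrees almost everywhere with the cutoff
   rule "priority > t", which has the same x_m and is implemented by A*
   because h^-1 is increasing. *)

Lemma derivable_linear_approx (R : realType) (u : R -> R) (x : R) :
  derivable u x 1 -> forall eta : R, 0 < eta ->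
  exists2 del : R, 0 < del &
    forall d, `|d| < del -> `|u (x + d) - u x - d * derive1 u x| <= eta * `|d|.
Proof.
move=> ux eta eta0.
have : (fun d => d^-1 *: ((u \o shift x) (d *: 1) - u x)) @ 0^' --> derive1 u x.
  by rewrite derive1E; exact: ux.
move/fcvgrPdist_lt => /(_ eta eta0) slope_near.
have : \forall d \near (0 : R)^',
    `|derive1 u x - d^-1 *: ((u \o shift x) (d *: 1) - u x)| < eta := slope_near.
rewrite near_withinE => /nbhs_ballP[del /= del0 near_u].
exists del => // d dlt; have [->|d0] := eqVneq d 0.
  by rewrite addr0 subrr mul0r subr0 normr0 mulr0.
have : ball 0 del d by rewrite /ball /= sub0r normrN.
move=> /near_u /(_ d0) /=; rewrite [d%:A]mulr1 [d + x]addrC => /ltW slope_d.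
have -> : u (x + d) - u x - d * derive1 u x =
    - (d * (derive1 u x - d^-1 * (u (x + d) - u x))).
  by rewrite mulrBr mulrA mulfV // mul1r opprB.
by rewrite normrN normrM mulrC ler_wpM2r.
Qed.

(** * Integrals over subsets *)

Section measure_lemmas.
Context d (T : measurableType d) (R : realType) (mu : {measure set T -> \bar R}).

Lemma Rintegral_mask (D : set T) (b : T -> bool) (p : T -> R) :
  \int[mu]_(x in D) ((b x)%:R * p x) = \int[mu]_(x in [set x | b x] `&` D) p x.
Proof.
rewrite Rintegral_mkcondl; apply: eq_Rintegral => x _; rewrite patchE.
case: (boolP (b x)) => bx; first by rewrite mem_set ?mul1r.
by rewrite memNset ?mul0r //=; exact/negP.
Qed.

Lemma measurable_fun_mask (D : set T) (b : T -> bool) :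
  measurable D -> measurable (D `&` [set x | b x]) ->
  measurable_fun D (fun x => (b x)%:R : R).
Proof.
move=> mD mDb.
apply: (eq_measurable_fun _ _ (@measurable_indic _ T R D _ mDb)) => x /[!inE] Dx.
rewrite /indic; case: (boolP (b x)) => bx; first by rewrite mem_set.
by rewrite memNset //= => -[_]; exact/negP.
Qed.

Lemma Rintegral_ge0_eq0_negligible (D : set T) (p : T -> R) :
  measurable D -> mu.-integrable D (EFin \o p) -> (forall x, D x -> 0 <= p x) ->
  \int[mu]_(x in D) p x = 0 -> mu.-negligible (D `&` [set x | p x != 0]).
Proof.
move=> mD ip p0 ip0.
have /(ae_eq_integral_abs mu mD (measurable_int mu ip)).1 :
    (\int[mu]_(x in D) `|(EFin \o p) x| = 0)%E.
  rewrite (eq_integral (EFin \o p)); last first.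
    by move=> x /[!inE] Dx; rewrite /= ger0_norm ?p0.
  by rewrite -(fineK (integrable_fin_num mD ip)) -/(Rintegral _ _ _) ip0.
apply: negligibleS => x [Dx px] /(_ Dx) [] /eqP.
by rewrite (negbTE px).
Qed.

Lemma Rintegral_setDU (X Y Z : set T) (p : T -> R) :
  measurable X -> measurable Y -> measurable Z -> Y `<=` X -> X `&` Z = set0 ->
  mu.-integrable (X `|` Z) (EFin \o p) ->
  \int[mu]_(x in (X `\` Y) `|` Z) p x =
  \int[mu]_(x in X) p x - \int[mu]_(x in Y) p x + \int[mu]_(x in Z) p x.
Proof.
move=> mX mY mZ YX XZ ip.
have mXY : measurable (X `\` Y) by exact: measurableD.
have mXZ : measurable (X `|` Z) by exact: measurableU.
have iX : mu.-integrable X (EFin \o p) := integrableS mXZ mX (@subsetUl _ X Z) ip.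
have iXYZ : mu.-integrable ((X `\` Y) `|` Z) (EFin \o p).
  have sub : (X `\` Y) `|` Z `<=` X `|` Z by apply: setSU; exact: subDsetl.
  have mXYZ : measurable ((X `\` Y) `|` Z) by exact: measurableU.
  exact: integrableS mXZ mXYZ sub ip.
rewrite Rintegral_setU //; last first.
  by apply/eqP/seteqP; split => // x [[Xx _] Zx]; rewrite -XZ.
rewrite -[in \int[mu]_(x in X) _](setDUK YX) setUC Rintegral_setU //.
- by rewrite addrK.
- by rewrite setUC setDUK.
- by apply/eqP/seteqP; split => // x [[_ nYx] Yx].
Qed.

Lemma Rintegral_mask_ae (D : set T) (b1 b2 : T -> bool) (p : T -> R) :
  measurable D -> mu.-integrable D (EFin \o p) ->
  measurable (D `&` [set x | b1 x]) -> measurable (D `&` [set x | b2 x]) ->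
  mu.-negligible [set x | D x /\ p x != 0 /\ b1 x != b2 x] ->
  \int[mu]_(x in D) ((b1 x)%:R * p x) = \int[mu]_(x in D) ((b2 x)%:R * p x).
Proof.
move=> mD ip mb1 mb2 N; rewrite /Rintegral; congr fine.
have /measurable_EFinP mp := measurable_int mu ip.
apply: ae_eq_integral => //.
- by apply/measurable_EFinP; apply: measurable_funM => //; exact: measurable_fun_mask.
- by apply/measurable_EFinP; apply: measurable_funM => //; exact: measurable_fun_mask.
apply: negligibleS N => x /= /not_implyP[Dx neq]; split=> //; split.
  by apply: contra_notN neq => /eqP ->; rewrite !mulr0.
by apply: contra_notN neq => /eqP ->.
Qed.

Lemma Rintegral_gt0_nonempty (X : set T) (p : T -> R) :
  0 < \int[mu]_(x in X) p x -> X !=set0.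
Proof.
apply: contraPP => /set0P/negP/negPn/eqP ->.
by rewrite Rintegral_set0 ltxx.
Qed.

Lemma Rintegral_mulr_le (D : set T) (w p : T -> R) (r : R) :
  measurable D -> mu.-integrable D (EFin \o p) ->
  mu.-integrable D (EFin \o (fun x => w x * p x)) ->
  (forall x, D x -> 0 <= p x) -> (forall x, D x -> w x <= r) ->
  \int[mu]_(x in D) (w x * p x) <= r * \int[mu]_(x in D) p x.
Proof.
move=> mD ip iwp p0 wr; rewrite -RintegralZl //; apply: le_Rintegral => //.
  by apply: (eq_integrable mD _ _ _ (integrableZl mD r ip)) => x _.
by move=> x Dx; rewrite ler_wpM2r ?p0 ?wr.
Qed.

Lemma Rintegral_mulr_ge (D : set T) (w p : T -> R) (r : R) :
  measurable D -> mu.-integrable D (EFin \o p) ->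
  mu.-integrable D (EFin \o (fun x => w x * p x)) ->
  (forall x, D x -> 0 <= p x) -> (forall x, D x -> r <= w x) ->
  r * \int[mu]_(x in D) p x <= \int[mu]_(x in D) (w x * p x).
Proof.
move=> mD ip iwp p0 rw; rewrite -RintegralZl //; apply: le_Rintegral => //.
  by apply: (eq_integrable mD _ _ _ (integrableZl mD r ip)) => x _.
by move=> x Dx; rewrite ler_wpM2r ?p0 ?rw.
Qed.

End measure_lemmas.

Lemma Rintegral_subset_ivt (R : realType) (a b : R) (X : set R) (p : R -> R) (e : R) :
  a <= b -> measurable X -> X `<=` `[a, b] ->
  lebesgue_measure.-integrable X (EFin \o p) ->
  0 <= e <= \int[lebesgue_measure]_(s in X) p s ->
  exists Y : set R, [/\ measurable Y, Y `<=` X &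
    \int[lebesgue_measure]_(s in Y) p s = e].
Proof.
move=> ab mX Xab ip /andP[e0 eX].
have iab : lebesgue_measure.-integrable `[a, b] (EFin \o (p \_ X)).
  have -> : EFin \o (p \_ X) = (EFin \o p) \_ X.
    by apply/funext => s; rewrite /= !patchE; case: ifP.
  have mXR : measurable (X : set (measurableTypeR R)) := mX.
  have iT := (integrable_mkcond _ mXR).1 ip.
  by apply: (integrableS measurableT _ _ iT).
pose F r := parameterized_integral lebesgue_measure a r (p \_ X).
have Fa : F a = 0 by rewrite /F /parameterized_integral set_itv1 Rintegral_set1.
have Fb : F b = \int[lebesgue_measure]_(s in X) p s.
  by rewrite /F /parameterized_integral -Rintegral_mkcondl setIidl.
have [r _ Fr] : exists2 r, r \in `[a, b] & F r = e.
  apply: IVT => //; first exact: parameterized_integral_continuous.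
  by rewrite Fa Fb ge_min e0 le_max eX orbT.
exists (X `&` `[a, r]); split; [exact: measurableI | exact: subIsetl |].
by rewrite Rintegral_mkcondl -Fr.
Qed.

(** * The unit interval and the score transform h *)

Lemma measurable_I01 {R : realType} : measurable (@I01 R : set (measurableTypeR R)).
Proof. exact: measurable_itv. Qed.

Lemma I01_bounds {R : realType} (s : R) : @I01 R s -> 0 <= s <= 1.
Proof. by rewrite /I01 /= in_itv. Qed.

Lemma I01_0 {R : realType} : @I01 R 0.
Proof. by rewrite /I01 /= in_itv /= ler01 lexx. Qed.

Lemma I01_1 {R : realType} : @I01 R 1.
Proof. by rewrite /I01 /= in_itv /= ler01 lexx. Qed.

Lemma density_ge0 {R : realType} {M : finType} (f : R -> M -> R) :
  is_density f -> forall k s, @I01 R s -> 0 <= f s k.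
Proof. by case=> f0 _ _ k s Is; apply: f0; exact: mem_set. Qed.

Lemma density_integrable {R : realType} {M : finType} (f : R -> M -> R) :
  is_density f -> forall k, lebesgue_measure.-integrable (@I01 R) (EFin \o f^~ k).
Proof. by case. Qed.

Section increasing_h.
Variable R : realType.

Lemma integrableS_I01 (X : set R) (p : R -> R) :
  measurable X -> X `<=` @I01 R ->
  lebesgue_measure.-integrable (@I01 R) (EFin \o p) ->
  lebesgue_measure.-integrable X (EFin \o p).
Proof. by move=> mX XI; apply: integrableS => //; exact: measurable_I01. Qed.

Variable h : R -> R.
Hypothesis h_cont : {within @I01 R, continuous h}.
Hypothesis h_incr : {in @I01 R &, forall a b, a < b -> h a < h b}.

Lemma h_bounds_I01 (s : R) : @I01 R s -> h 0 <= h s <= h 1.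
Proof.
move=> /[dup] /mem_set Is /I01_bounds /andP[s0 s1].
have I0 : (0 : R) \in @I01 R := mem_set I01_0.
have I1 : (1 : R) \in @I01 R := mem_set I01_1.
apply/andP; split.
  have [<-|n0s] := eqVneq 0 s; first by [].
  have lt0s : 0 < s by rewrite lt_neqAle n0s s0.
  exact: ltW (h_incr I0 Is lt0s).
have [->|ns1] := eqVneq s 1; first by [].
have lts1 : s < 1 by rewrite lt_neqAle ns1 s1.
exact: ltW (h_incr Is I1 lts1).
Qed.

Lemma h_inj_I01 : {in @I01 R &, injective h}.
Proof.
move=> s s' Is Is' hss'; apply/eqP; rewrite eq_le !leNgt.
by apply/andP; split; apply/negP => lt;
  [have := h_incr Is' Is lt | have := h_incr Is Is' lt]; rewrite hss' ltxx.
Qed.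

Lemma h_level_negligible (r : R) :
  lebesgue_measure.-negligible (@I01 R `&` [set s | h s = r]).
Proof.
have [[s0 [Is0 hs0]]|] := pselect (exists s0, @I01 R s0 /\ h s0 = r); last first.
  move=> none; apply: negligibleS (negligible_set0 _) => s [Is hs].
  by apply: none; exists s.
have N0 : lebesgue_measure.-negligible [set s0].
  by apply/negligibleP; [exact: measurable_set1 | exact: lebesgue_measure_set1].
apply: negligibleS N0.
move=> s [Is /= hs]; apply: h_inj_I01; rewrite ?inE //.
by rewrite hs hs0.
Qed.

Lemma measurable_fun_h : measurable_fun (@I01 R : set (measurableTypeR R)) h.
Proof. exact: subspace_continuous_measurable_fun measurable_I01 h_cont. Qed.

Lemma measurable_h_lt (k : R) : measurable (@I01 R `&` [set s | h s < k]).
Proof.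
have -> : [set s | h s < k] = h @^-1` `]-oo, k[.
  by apply/seteqP; split => s /=; rewrite in_itv.
exact: measurable_fun_h measurable_I01 _ (measurable_itv _).
Qed.

Lemma measurable_h_gt (k : R) : measurable (@I01 R `&` [set s | k < h s]).
Proof.
have -> : [set s | k < h s] = h @^-1` `]k, +oo[.
  by apply/seteqP; split => s /=; rewrite in_itv /= andbT.
exact: measurable_fun_h measurable_I01 _ (measurable_itv _).
Qed.

Lemma integrable_hM (p : R -> R) :
  lebesgue_measure.-integrable (@I01 R) (EFin \o p) ->
  lebesgue_measure.-integrable (@I01 R) (EFin \o (fun s => h s * p s)).
Proof.
move=> ip; have -> : EFin \o (fun s => h s * p s) = ((EFin \o h) \* (EFin \o p))%E.
  by apply/funext.
have h_bounded s : @I01 R s -> `|h s| <= `|h 0| + `|h 1|.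
  move=> /h_bounds_I01 /andP[hs0 hs1]; have := ler_norm (h 1).
  have := ler_norm (- h 0); rewrite normrN.
  have := normr_ge0 (h 0); have := normr_ge0 (h 1).
  by rewrite ler_norml => *; apply/andP; split; lra.
apply: integrableMr ip; [exact: measurable_I01 | exact: measurable_fun_h |].
exists (`|h 0| + `|h 1|); split; first exact: num_real.
by move=> b hb s Is; apply: le_trans (h_bounded s Is) (ltW hb).
Qed.

End increasing_h.

(** * Reassigning mass between types *)

Section allocations.
Variables (R : realType) (M : finType).
Implicit Types mu : R -> M -> bool.

Definition allocated mu (k : M) : set R := [set s | mu s k] `&` @I01 R.

Definition rejected mu (k : M) : set R := [set s | ~~ mu s k] `&` @I01 R.

Lemma measurable_allocated mu k : allocation mu -> measurable (allocated mu k).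
Proof. by move=> alloc; rewrite /allocated setIC; exact: alloc. Qed.

Lemma measurable_rejected mu k : allocation mu -> measurable (rejected mu k).
Proof.
move=> alloc; have -> : rejected mu k = @I01 R `\` allocated mu k.
  apply/seteqP; split => s [].
    by move=> /negP nmu Is; split => // -[].
  by move=> Is nalloc; split => //; apply/negP => mus; apply: nalloc.
apply: measurableD; [exact: measurable_I01 | exact: measurable_allocated].
Qed.

Definition reassign mu (Y Z : M -> set R) : R -> M -> bool :=
  fun s k => (mu s k && ~~ `[< Y k s >]) || `[< Z k s >].

Section reassign.
Variables (mu : R -> M -> bool) (Y Z : M -> set R).
Hypothesis mu_alloc : allocation mu.
Hypothesis mY : forall k, measurable (Y k).
Hypothesis mZ : forall k, measurable (Z k).
Hypothesis Y_allocated : forall k, Y k `<=` allocated mu k.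
Hypothesis Z_rejected : forall k, Z k `<=` rejected mu k.

Lemma allocated_reassign k :
  allocated (reassign mu Y Z) k = (allocated mu k `\` Y k) `|` Z k.
Proof.
apply/seteqP; split => s; rewrite /allocated /reassign /=.
  case=> /orP[/andP[mus /asboolPn nY] Is|/asboolP Zs _]; [by left | by right].
case=> [[[mus Is] nY]|Zs]; last first.
  by have [_ Is] := Z_rejected Zs; split => //=; rewrite (asboolT Zs) orbT.
by split=> //; rewrite mus /=; apply/orP; left; exact/asboolPn.
Qed.

Lemma allocation_reassign : allocation (reassign mu Y Z).
Proof.
move=> k; rewrite setIC -/(allocated _ k) allocated_reassign.
by apply: measurableU => //; apply: measurableD => //; exact: measurable_allocated.
Qed.

Lemma Rintegral_reassign (p : R -> R) k :
  lebesgue_measure.-integrable (@I01 R) (EFin \o p) ->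
  \int[lebesgue_measure]_(s in @I01 R) ((reassign mu Y Z s k)%:R * p s) =
  \int[lebesgue_measure]_(s in @I01 R) ((mu s k)%:R * p s)
  - \int[lebesgue_measure]_(s in Y k) p s + \int[lebesgue_measure]_(s in Z k) p s.
Proof.
move=> ip; rewrite !Rintegral_mask -!/(allocated _ k) allocated_reassign.
have mA := measurable_allocated k mu_alloc.
apply: Rintegral_setDU => //; [exact: mY | exact: mZ | |].
- apply/seteqP; split => // s [[mus _] /Z_rejected[/negP]].
  by rewrite mus.
- apply: (integrableS _ _ _ ip).
  + exact: measurable_I01.
  + by apply: measurableU; [exact: mA | exact: mZ].
  + by move=> s [[_ Is]|/Z_rejected[]].
Qed.

End reassign.
End allocations.

(** * First-order conditions for optimality *)

Lemma sumr_delta (R : pzSemiRingType) (M : finType) (m : M) (F : M -> R) :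
  \sum_k (k == m)%:R * F k = F m.
Proof.
by rewrite (bigD1 m) //= eqxx mul1r big1 ?addr0 // => k /negbTE ->; rewrite mul0r.
Qed.

Lemma sum_transfer_ge (R : realFieldType) (M : finType) (u : M -> R -> R)
    (x c : M -> R) (m m' : M) (e eta : R) :
  0 <= e -> 0 <= eta ->
  (forall k d, (k == m) || (k == m') -> `|d| <= e ->
     `|u k (x k + d) - u k (x k) - d * c k| <= eta * `|d|) ->
  e * (c m' - c m) - 2 * eta * e <=
  \sum_k u k (x k - (k == m)%:R * e + (k == m')%:R * e) - \sum_k u k (x k).
Proof.
move=> e0 eta0 approx; rewrite -sumrB.
have step k d : (k == m) || (k == m') -> `|d| <= e ->
    d * c k - eta * `|d| <= u k (x k + d) - u k (x k).
  by move=> /approx /[apply]; rewrite ler_norml => /andP[+ _]; lra.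
have [<-|mm'] := eqVneq m m'.
  rewrite big1 => [|k _]; first by rewrite subrr mulr0; have := mulr_ge0 eta0 e0; lra.
  by rewrite subrK subrr.
rewrite (bigD1 m) //= (bigD1 m') 1?eq_sym //= big1 => [|k /andP[km' km]]; last first.
  by rewrite (negbTE km) (negbTE km') !mul0r subr0 addr0 subrr.
rewrite eqxx eq_sym (negbTE mm') eqxx !mul1r !mul0r addr0 subr0.
have := step m (- e); rewrite eqxx normrN ger0_norm // => /(_ isT (lexx e)).
have := step m' e; rewrite eqxx orbT ger0_norm // => /(_ isT (lexx e)).
lra.
Qed.

Section optimality.
Variables (R : realType) (M : finType) (q : R) (g h : R -> R).
Variables (u : M -> R -> R) (f : R -> M -> R).
Hypothesis h_cont : {within @I01 R, continuous h}.
Hypothesis h_incr : {in @I01 R &, forall a b, a < b -> h a < h b}.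
Hypothesis f_dens : is_density f.
Hypothesis g_incr : {homo g : a b / a < b}.
Hypothesis u_der : forall k y, derivable (u k) y 1.
Implicit Types (mu : R -> M -> bool) (c : M -> R).

Let f_ge0 := density_ge0 f_dens.
Let f_int := density_integrable f_dens.

Definition marginal mu (k : M) : R := derive1 (u k) (xm f mu k).

Definition welfare mu : R := sbar h f mu + \sum_k u k (xm f mu k).

Lemma marginal_linear_approx mu (m m' : M) (eta : R) : 0 < eta ->
  exists2 del : R, 0 < del & forall k d, (k == m) || (k == m') -> `|d| < del ->
    `|u k (xm f mu k + d) - u k (xm f mu k) - d * marginal mu k| <= eta * `|d|.
Proof.
move=> eta0; have [d1 d10 approx1] := derivable_linear_approx (@u_der m (xm f mu m)) eta0.
have [d2 d20 approx2] := derivable_linear_approx (@u_der m' (xm f mu m')) eta0.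
exists (Num.min d1 d2); first by rewrite lt_min d10 d20.
move=> k d /orP[] /eqP -> ltd.
  by apply: approx1; apply: lt_le_trans ltd _; rewrite ge_min lexx.
by apply: approx2; apply: lt_le_trans ltd _; rewrite ge_min lexx orbT.
Qed.

Definition allocated_below mu c (a : R) (k : M) : set R :=
  allocated mu k `&` [set s | h s + c k < a].

Definition rejected_above mu c (b : R) (k : M) : set R :=
  rejected mu k `&` [set s | b < h s + c k].

Lemma measurable_allocated_below mu c a k :
  allocation mu -> measurable (allocated_below mu c a k).
Proof.
move=> alloc; have -> : allocated_below mu c a k =
    allocated mu k `&` (@I01 R `&` [set s | h s < a - c k]).
  apply/seteqP; split => s /=.
    by move=> [As /= hs]; split => //; split => /=; [case: As | lra].
  by move=> [As [_ /= hs]]; split => //=; lra.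
by apply: measurableI; [exact: measurable_allocated | exact: measurable_h_lt].
Qed.

Lemma measurable_rejected_above mu c b k :
  allocation mu -> measurable (rejected_above mu c b k).
Proof.
move=> alloc; have -> : rejected_above mu c b k =
    rejected mu k `&` (@I01 R `&` [set s | b - c k < h s]).
  apply/seteqP; split => s /=.
    by move=> [As /= hs]; split => //; split => /=; [case: As | lra].
  by move=> [As [_ /= hs]]; split => //=; lra.
by apply: measurableI; [exact: measurable_rejected | exact: measurable_h_gt].
Qed.

Definition transfer mu (m : M) (Y : set R) (m' : M) (Z : set R) :=
  reassign mu (fun k => if k == m then Y else set0)
              (fun k => if k == m' then Z else set0).

Section transfer.
Variables (mu : R -> M -> bool) (m m' : M) (Y Z : set R) (e : R).
Hypothesis mu_alloc : allocation mu.
Hypotheses (mY : measurable Y) (mZ : measurable Z).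
Hypothesis Y_allocated : Y `<=` allocated mu m.
Hypothesis Z_rejected : Z `<=` rejected mu m'.

Let Rintegral_transfer (p : R -> R) k :
  lebesgue_measure.-integrable (@I01 R) (EFin \o p) ->
  \int[lebesgue_measure]_(s in @I01 R) ((transfer mu m Y m' Z s k)%:R * p s) =
  \int[lebesgue_measure]_(s in @I01 R) ((mu s k)%:R * p s)
  - (k == m)%:R * \int[lebesgue_measure]_(s in Y) p s
  + (k == m')%:R * \int[lebesgue_measure]_(s in Z) p s.
Proof.
move=> ip; rewrite Rintegral_reassign //.
- by congr (_ - _ + _); case: eqP; rewrite ?mul1r ?mul0r ?Rintegral_set0.
- by move=> k'; case: eqP.
- by move=> k'; case: eqP.
- by move=> k'; case: eqP => [->|].
- by move=> k'; case: eqP => [->|].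
Qed.

Hypotheses (Y_mass : \int[lebesgue_measure]_(s in Y) f s m = e)
           (Z_mass : \int[lebesgue_measure]_(s in Z) f s m' = e).

Lemma xm_transfer k :
  xm f (transfer mu m Y m' Z) k = xm f mu k - (k == m)%:R * e + (k == m')%:R * e.
Proof.
rewrite /xm Rintegral_transfer //.
by congr (_ - _ + _); case: eqP => [->|]; rewrite ?Y_mass ?Z_mass ?mul0r.
Qed.

Lemma sbar_transfer : sbar h f (transfer mu m Y m' Z) = sbar h f mu
  - \int[lebesgue_measure]_(s in Y) (h s * f s m)
  + \int[lebesgue_measure]_(s in Z) (h s * f s m').
Proof.
have sbarE mu' : sbar h f mu' =
    \sum_k \int[lebesgue_measure]_(s in @I01 R) ((mu' s k)%:R * (h s * f s k)).
  by apply: eq_bigr => k _; apply: eq_Rintegral => s _; rewrite mulrA.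
rewrite !sbarE.
have ihf k := integrable_hM h_cont h_incr (f_int k).
rewrite (eq_bigr _ (fun k _ => Rintegral_transfer k (ihf k))).
by rewrite !big_split /= sumrN !sumr_delta.
Qed.

Lemma feasible_transfer : feasible q f mu -> feasible q f (transfer mu m Y m' Z).
Proof.
case=> _ sum_le; split; first by apply: allocation_reassign => // k; case: eqP => // ->.
rewrite (eq_bigr _ (fun k _ => xm_transfer k)) !big_split /= sumrN.
by rewrite (sumr_delta m (fun=> e)) (sumr_delta m' (fun=> e)) subrK.
Qed.

Lemma welfare_transfer_ge (a b eta : R) :
  Y `<=` [set s | h s + marginal mu m < a] ->
  Z `<=` [set s | b < h s + marginal mu m'] -> 0 <= e -> 0 <= eta ->
  (forall k d, (k == m) || (k == m') -> `|d| <= e ->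
    `|u k (xm f mu k + d) - u k (xm f mu k) - d * marginal mu k| <= eta * `|d|) ->
  welfare mu + (b - a) * e - 2 * eta * e <= welfare (transfer mu m Y m' Z).
Proof.
move=> Y_low Z_high e0 eta0 approx.
have YI : Y `<=` @I01 R by move=> s /Y_allocated[].
have ZI : Z `<=` @I01 R by move=> s /Z_rejected[].
have Yh : \int[lebesgue_measure]_(s in Y) (h s * f s m) <= (a - marginal mu m) * e.
  rewrite -Y_mass; apply: Rintegral_mulr_le => //.
  - exact: integrableS_I01 mY YI (f_int m).
  - exact: integrableS_I01 mY YI (integrable_hM h_cont h_incr (f_int m)).
  - by move=> s /YI; exact: f_ge0.
  - by move=> s /Y_low /=; lra.
have Zh : (b - marginal mu m') * e <= \int[lebesgue_measure]_(s in Z) (h s * f s m').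
  rewrite -Z_mass; apply: Rintegral_mulr_ge => //.
  - exact: integrableS_I01 mZ ZI (f_int m').
  - exact: integrableS_I01 mZ ZI (integrable_hM h_cont h_incr (f_int m')).
  - by move=> s /ZI; exact: f_ge0.
  - by move=> s /Z_high /=; lra.
have u_gain := sum_transfer_ge e0 eta0 approx.
rewrite /welfare sbar_transfer (eq_bigr _ (fun k _ => congr1 (u k) (xm_transfer k))).
lra.
Qed.

End transfer.

Lemma optimal_allocates_all mu :
  prefers_full q g h u f -> optimal q g h u f mu -> \sum_k xm f mu k = q.
Proof.
move=> full [[alloc sum_le] opt]; apply/eqP; rewrite eq_le sum_le /= leNgt.
apply/negP => /(full mu (conj alloc sum_le))[mu' [feas' _ better]].
by have := opt mu' feas'; rewrite leNgt better.
Qed.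

Lemma optimal_welfare_max mu mu' :
  optimal q g h u f mu -> feasible q f mu' -> welfare mu' <= welfare mu.
Proof.
by case=> _ opt /opt; rewrite /xi; apply: contraTT; rewrite -!ltNge; exact: g_incr.
Qed.

Lemma optimal_no_profitable_swap mu (m m' : M) (a b : R) :
  optimal q g h u f mu -> a < b ->
  0 < \int[lebesgue_measure]_(s in allocated_below mu (marginal mu) a m) f s m ->
  0 < \int[lebesgue_measure]_(s in rejected_above mu (marginal mu) b m') f s m' ->
  False.
Proof.
move=> opt ab; set A := allocated_below _ _ a m; set B := rejected_above _ _ b m'.
set P := \int[lebesgue_measure]_(s in A) f s m.
set Q := \int[lebesgue_measure]_(s in B) f s m' => P0 Q0.
have [[alloc _] _] := opt.
have mA : measurable A by exact: measurable_allocated_below.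
have mB : measurable B by exact: measurable_rejected_above.
have AI : A `<=` @I01 R by move=> s [[]].
have BI : B `<=` @I01 R by move=> s [[]].
pose eta := (b - a) / 4.
have eta0 : 0 < eta by rewrite divr_gt0 ?subr_gt0.
have [del del0 approx] := marginal_linear_approx mu m m' eta0.
pose e := Num.min (Num.min P Q) (del / 2).
have e0 : 0 < e by rewrite !lt_min P0 Q0 /= divr_gt0.
have [eP eQ] : e <= P /\ e <= Q by rewrite !ge_min !lexx !orbT.
have e_half : e <= del / 2 by rewrite ge_min lexx orbT.
have e_del : e < del by lra.
have [Y [mY YA Y_mass]] : exists Y, [/\ measurable Y, Y `<=` A &
    \int[lebesgue_measure]_(s in Y) f s m = e].
  apply: Rintegral_subset_ivt ler01 mA AI (integrableS_I01 mA AI (f_int m)) _.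
  by rewrite (ltW e0).
have [Z [mZ ZB Z_mass]] : exists Z, [/\ measurable Z, Z `<=` B &
    \int[lebesgue_measure]_(s in Z) f s m' = e].
  apply: Rintegral_subset_ivt ler01 mB BI (integrableS_I01 mB BI (f_int m')) _.
  by rewrite (ltW e0).
have [YAl Y_low] : Y `<=` allocated mu m /\ Y `<=` [set s | h s + marginal mu m < a].
  by split=> s /YA[].
have [ZRej Z_high] : Z `<=` rejected mu m' /\ Z `<=` [set s | b < h s + marginal mu m'].
  by split=> s /ZB[].
have := optimal_welfare_max opt
  (feasible_transfer alloc mY mZ YAl ZRej Y_mass Z_mass opt.1).
have := welfare_transfer_ge alloc mY mZ YAl ZRej Y_mass Z_mass Y_low Z_high
  (ltW e0) (ltW eta0) (fun k d km dle => approx k d km (le_lt_trans dle e_del)).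
have : 0 < (b - a) * e by rewrite mulr_gt0 ?subr_gt0.
rewrite /eta; lra.
Qed.
End optimality.

(** * Optimal allocations are cutoff rules *)

Definition cutoff (R : realType) (M : finType) (h : R -> R) (c : M -> R) (t : R) :
  R -> M -> bool := fun s k => t < h s + c k.

Section cutoff.
Variables (R : realType) (M : finType) (h : R -> R) (f : R -> M -> R).
Variables (mu : R -> M -> bool) (c : M -> R).
Hypothesis h_cont : {within @I01 R, continuous h}.
Hypothesis h_incr : {in @I01 R &, forall a b, a < b -> h a < h b}.
Hypothesis f_dens : is_density f.
Hypothesis mu_alloc : allocation mu.
Hypothesis no_swap : forall (m m' : M) (a b : R), a < b ->
  0 < \int[lebesgue_measure]_(s in allocated_below h mu c a m) f s m ->
  0 < \int[lebesgue_measure]_(s in rejected_above h mu c b m') f s m' -> False.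

Let f_ge0 := density_ge0 f_dens.
Let f_int := density_integrable f_dens.

Let mass0_negligible (X : set R) k : measurable X -> X `<=` @I01 R ->
  ~ 0 < \int[lebesgue_measure]_(s in X) f s k ->
  lebesgue_measure.-negligible (X `&` [set s | f s k != 0]).
Proof.
move=> mX XI /negP; rewrite -leNgt => le0.
apply: Rintegral_ge0_eq0_negligible => //.
- exact: integrableS_I01 mX XI (f_int k).
- by move=> s /XI; exact: f_ge0.
- by apply/eqP; rewrite eq_le le0 Rintegral_ge0 // => s /XI; exact: f_ge0.
Qed.

Let C : R := \sum_k `|c k|.

Let priority_gt k s : @I01 R s -> h 0 - C - 1 < h s + c k.
Proof.
move=> /(h_bounds_I01 h_incr) /andP[h0s _].
have : `|c k| <= C by rewrite /C (bigD1 k) //= lerDl sumr_ge0.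
by rewrite ler_norml => /andP[] *; lra.
Qed.

Let priority_le k s : @I01 R s -> h s + c k <= h 1 + C.
Proof.
move=> /(h_bounds_I01 h_incr) /andP[_ hs1].
have : `|c k| <= C by rewrite /C (bigD1 k) //= lerDl sumr_ge0.
by rewrite ler_norml => /andP[] *; lra.
Qed.

(* The first alternative only makes the set nonempty: [h 0 - C - 1] lies
   below every priority. *)
Let levels : set R := [set b | b = h 0 - C - 1 \/
  exists k, 0 < \int[lebesgue_measure]_(s in rejected_above h mu c b k) f s k].

Let t := sup levels.

Let levels_nonempty : levels !=set0.
Proof. by exists (h 0 - C - 1); left. Qed.

Let levels_bounded : ubound levels (h 1 + C).
Proof.
move=> b [->|[k /Rintegral_gt0_nonempty[s [[_ Is] /= lt_bs]]]].
  have /andP[h01 _] := h_bounds_I01 h_incr I01_1.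
  have : 0 <= C by rewrite sumr_ge0.
  lra.
by have := priority_le k Is; lra.
Qed.

Let levels_le_t b : levels b -> b <= t.
Proof. by apply: sup_upper_bound; split => //; exists (h 1 + C). Qed.

Let rejected_above_t_negligible k : lebesgue_measure.-negligible
  (rejected mu k `&` [set s | t < h s + c k] `&` [set s | f s k != 0]).
Proof.
have N n : lebesgue_measure.-negligible
    (rejected_above h mu c (t + n.+1%:R^-1) k `&` [set s | f s k != 0]).
  apply: mass0_negligible; [exact: measurable_rejected_above | by move=> s [[]] |].
  move=> pos; have := levels_le_t (or_intror (ex_intro _ k pos)).
  have : 0 < n.+1%:R^-1 :> R by rewrite invr_gt0 ltr0n.
  by move: (n.+1%:R^-1) => d; lra.
apply: negligibleS (negligible_bigcup N) => s [[Rs /= lt_ts] fs].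
by have [n lt_n] := ltr_add_invr lt_ts; exists n.
Qed.

Let allocated_below_t_negligible k : lebesgue_measure.-negligible
  (allocated mu k `&` [set s | h s + c k < t] `&` [set s | f s k != 0]).
Proof.
have N n : lebesgue_measure.-negligible
    (allocated_below h mu c (t - n.+1%:R^-1) k `&` [set s | f s k != 0]).
  apply: mass0_negligible; [exact: measurable_allocated_below | by move=> s [[]] |].
  move=> pos; suff : t <= t - n.+1%:R^-1.
    have : 0 < n.+1%:R^-1 :> R by rewrite invr_gt0 ltr0n.
    by move: (n.+1%:R^-1) => d; lra.
  apply: ge_sup => // b [->|[k' pos']].
    have [s [[_ Is] /= lt_s]] := Rintegral_gt0_nonempty pos.
    by have := priority_gt k Is; move: (n.+1%:R^-1) lt_s => d; lra.
  by rewrite leNgt; apply/negP => lt_b; exact: no_swap lt_b pos pos'.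
apply: negligibleS (negligible_bigcup N) => s [[As /= lt_st] fs].
have [n lt_n] := ltr_add_invr lt_st; exists n => //; split => //; split => //=.
by move: (n.+1%:R^-1) lt_n => d; lra.
Qed.

Lemma cutoff_ae_equal : exists t, ae_equal f mu (cutoff h c t).
Proof.
exists t => k.
have N := negligibleU (negligibleU (rejected_above_t_negligible k)
  (allocated_below_t_negligible k)) (h_level_negligible h_incr (t - c k)).
apply: negligibleS N => s [/set_mem Is [fs]]; rewrite /cutoff.
case: ltgtP => [lt_ts|lt_st|eq_ts]; case: (boolP (mu s k)) => //= mus _.
- by left; left; split => //; split.
- by left; right; split => //; split.
- by right; split => //=; rewrite eq_ts addrK.
Qed.

End cutoff.

Section implementation.
Variables (R : realType) (M : finType).
Implicit Types (mu : R -> M -> bool) (f : R -> M -> R).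

Lemma xm_ae_equal f mu mu' k : is_density f -> allocation mu -> allocation mu' ->
  ae_equal f mu mu' -> xm f mu k = xm f mu' k.
Proof.
move=> f_dens alloc alloc' ae; apply: Rintegral_mask_ae.
- exact: measurable_I01.
- exact: density_integrable.
- exact: alloc.
- exact: alloc'.
- by apply: negligibleS (ae k) => s [Is neq]; split => //; exact: mem_set.
Qed.

Lemma allocation_cutoff (h : R -> R) (c : M -> R) t :
  {within @I01 R, continuous h} -> allocation (cutoff h c t).
Proof.
move=> h_cont k; have -> : @I01 R `&` [set s | cutoff h c t s k] =
    @I01 R `&` [set s | t - c k < h s].
  by apply/seteqP; split => s [Is /= lt_s]; split => //=; move: lt_s; rewrite /cutoff;
    lra.
exact: measurable_h_gt.
Qed.

Lemma cutoff_implements q (hinv h : R -> R) (u : M -> R -> R) f mu t :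
  {homo hinv : x y / x < y} ->
  (forall s k, mu s k = (t < h s + marginal u f mu k)) ->
  \sum_k xm f mu k = q -> implements q (Astar hinv h u) f mu.
Proof.
move=> hinv_incr muE sumq; split => // s k Is; rewrite /Astar -/(marginal u f mu k) muE.
split => [lt_ts s' k' Is'|above].
  by rewrite -/(marginal u f mu k') muE -leNgt => le_s't; apply: hinv_incr; lra.
apply/negPn/negP => le_st; have := above s k Is; rewrite muE le_st => /(_ isT).
by rewrite ltxx.
Qed.

End implementation.

Theorem proposition11 (R : realType) (M : finType) (q : R)
    (h g hinv : R -> R) (u : M -> R -> R) (f : R -> M -> R)
    (mu : R -> M -> bool) :
  0 < q < 1 ->
  {within (@I01 R), continuous h} ->
  {in (@I01 R) &, forall a b, a < b -> h a < h b} ->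
  (forall s, s \in (@I01 R) -> 0 <= h s) ->
  continuous g ->
  {homo g : a b / a < b} ->
  (forall m y, derivable (u m) y 1) ->
  {homo hinv : a b / a < b} ->
  (forall s, s \in (@I01 R) -> hinv (h s) = s) ->
  is_density f ->
  prefers_full q g h u f ->
  optimal q g h u f mu ->
  exists mu', [/\ allocation mu', ae_equal f mu mu' &
                  implements q (Astar hinv h u) f mu'].
Proof.
move=> _ h_cont h_incr _ _ g_incr u_der hinv_incr _ f_dens full opt.
have alloc := opt.1.1.
have [t ae] := cutoff_ae_equal h_cont h_incr f_dens alloc
  (fun m m' a b => optimal_no_profitable_swap h_cont h_incr f_dens g_incr u_der opt).
set mu' := cutoff h (marginal u f mu) t.
have alloc' : allocation mu' by exact: allocation_cutoff.
have xmE k : xm f mu' k = xm f mu k by rewrite (xm_ae_equal k f_dens alloc alloc' ae).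
exists mu'; split => //; apply: (cutoff_implements (t := t)) => //.
  by move=> s k; rewrite /marginal xmE.
by rewrite (eq_bigr _ (fun k _ => xmE k)); exact: optimal_allocates_all full opt.
Qed.
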